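(* Let $\delta\in(0,1)$, $\ell\in\mathbb N$, let $\mu$ be a distribution over $\{0,1\}^n$ and $\xi$ a $(\delta,\ell)$-robust detailing of $\mu$ with respect to a finite set $A$. Let $B$ be a finite set with $|B|\le\ell$, let $\xi'$ be a refinement of $\xi$ with respect to $B$, let $\eta=\xi'|_{2,3}$ (a distribution over $A\times B$), and let $\xi_{\langle\eta\rangle}$ be the flat refinement of $\xi$ with respect to $\eta$. Let $\Lambda'$ and $\Lambda_{\langle B\rangle}$ be the type distributions of $\xi'$ and $\xi_{\langle\eta\rangle}$ respectively (as detailings with respect to $A\times B$). Then $d^\eta_{EM}(\Lambda',\Lambda_{\langle B\rangle})\le\sqrt\delta$.
   Context: A detailing of $\mu$ w.r.t. a finite set $C$ is a distribution $\zeta$ over $\{0,1\}^n\times C$ with first marginal $\mu$; its type of $i\in[n]$ is $t_i\in[0,1]^C$, $t_i(c)=\Pr_{x\sim\zeta|_1^{2:c}}[x_i=1]$ when $\zeta|_2(c)>0$ (conditioning on second coordinate $c$) and $0$ otherwise; its type distribution is the law of $t_{\mathbf i}$, $\mathbf i$ uniform in $[n]$. Its index is $\mathrm{Ind}(\zeta)=\mathbb{E}_{i\sim[n]}\mathbb{E}_{c\sim\zeta|_2}[t_i(c)^2]$. A refinement of $\xi$ (over $\{0,1\}^n\times A$) with respect to $B$ is a distribution $\xi'$ over $\{0,1\}^n\times A\times B$ with $\xi'|_{1,2}=\xi$, viewed as a detailing of $\mu$ w.r.t. $A\times B$. $\xi$ is $(\delta,\ell)$-robust if $\mathrm{Ind}(\xi')\le\mathrm{Ind}(\xi)+\delta$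 for every finite $B$ with $|B|\le\ell$ and every refinement $\xi'$ of $\xi$ w.r.t. $B$. For a distribution $\eta$ on $A\times B$ with $\eta|_1=\xi|_2$, the flat refinement is $\xi_{\langle\eta\rangle}(x,a,b)=\xi(x,a)\cdot\eta|_2^{1:a}(b)$. For a distribution $\eta$ on a finite set $C$, $d^\eta_{\ell_1}(x,y)=\sum_c\eta(c)|x_c-y_c|$ on $[0,1]^C$, and $d^\eta_{EM}$ is the Earth Mover distance over it. *)

From HB Require Import structures.
From mathcomp Require Import all_boot all_order all_algebra.
From mathcomp Require Import boolp classical_sets reals.
Set Implicit Arguments. Unset Strict Implicit. Unset Printing Implicit Defensive.
Import Order.TTheory GRing.Theory Num.Theory.
Local Open Scope ring_scope.

Definition cube (n : nat) := {ffun 'I_n -> bool}.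

Section Defs.
Variable R : realType.

Definition is_dist (T : finType) (p : T -> R) :=
  (forall t, 0 <= p t) /\ \sum_t p t = 1.

Definition marg1 n (C : finType) (z : cube n * C -> R) (x : cube n) : R :=
  \sum_c z (x, c).
Definition marg2 n (C : finType) (z : cube n * C -> R) (c : C) : R :=
  \sum_(x : cube n) z (x, c).

Definition is_detailing n (C : finType) (mu : cube n -> R) (z : cube n * C -> R) :=
  is_dist z /\ forall x, marg1 z x = mu x.

(* type of coordinate i : t_i(c) = Pr_{x ~ z | c}[x_i = 1], or 0 if z|_2(c) = 0 *)
Definition typ n (C : finType) (z : cube n * C -> R) (i : 'I_n) : {ffun C -> R} :=
  [ffun c => if marg2 z c == 0 then 0
             else (\sum_(x : cube n) (if x i then z (x, c) else 0)) / marg2 z c].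

Definition Ind n (C : finType) (z : cube n * C -> R) : R :=
  (n%:R)^-1 * \sum_(i < n) \sum_c marg2 z c * (typ z i c) ^+ 2.

Definition typedist n (C : finType) (z : cube n * C -> R) (t : {ffun C -> R}) : R :=
  (#|[set i : 'I_n | typ z i == t]|)%:R / n%:R.

Definition is_refinement n (A B : finType) (xi : cube n * A -> R)
    (xi' : cube n * (A * B) -> R) :=
  is_dist xi' /\ forall x a, \sum_b xi' (x, (a, b)) = xi (x, a).

Definition robust n (A : finType) (xi : cube n * A -> R) (delta : R) (l : nat) :=
  forall (B : finType), (#|B| <= l)%N ->
  forall xi' : cube n * (A * B) -> R, is_refinement xi xi' ->
    Ind xi' <= Ind xi + delta.

Definition marg23 n (A B : finType) (xi' : cube n * (A * B) -> R) (ab : A * B) : R :=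
  \sum_(x : cube n) xi' (x, ab).

Definition cond2 (A B : finType) (eta : A * B -> R) (a : A) (b : B) : R :=
  let m := \sum_b' eta (a, b') in if m == 0 then 0 else eta (a, b) / m.

Definition flat n (A B : finType) (xi : cube n * A -> R) (eta : A * B -> R)
    (p : cube n * (A * B)) : R :=
  xi (p.1, p.2.1) * cond2 eta p.2.1 p.2.2.

Definition dl1 (C : finType) (eta : C -> R) (x y : {ffun C -> R}) : R :=
  \sum_c eta c * `|x c - y c|.

(* couplings of two finitely supported distributions (given by mass functions
   m1, m2), represented as finite lists of weighted pairs *)
Definition is_coupling (T : eqType) (m1 m2 : T -> R) (s : seq (R * (T * T))) :=
  [/\ forall p, p \in s -> 0 <= p.1,
      forall x, \sum_(p <- s | p.2.1 == x) p.1 = m1 x &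
      forall y, \sum_(p <- s | p.2.2 == y) p.1 = m2 y].

Definition dEM (T : eqType) (d : T -> T -> R) (m1 m2 : T -> R) : R :=
  inf [set r : R | exists s, is_coupling m1 m2 s /\
                   r = \sum_(p <- s) p.1 * d p.2.1 p.2.2].

End Defs.

(* Couple the two type distributions through the common coordinate i.  Where
   eta(a,b) > 0 the flat refinement has type t_i(a), so the cost of this
   coupling is E_i E_{(a,b) ~ eta} |t'_i(a,b) - t_i(a)|.  The second moment of
   the same deviation is Ind(xi') - Ind(xi), because t_i(a) is the
   eta(. | a)-average of t'_i(a,.); robustness bounds it by delta, and a
   first moment is at most the square root of the second. *)
From HB Require Import structures.
From mathcomp Require Import all_boot all_order all_algebra.
From mathcomp Require Import boolp classical_sets reals.
From mathcomp Require Import ring lra.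
Import Order.TTheory GRing.Theory Num.Theory.
Local Open Scope ring_scope.
Set Implicit Arguments. Unset Strict Implicit.

Section Types.
Variable R : realType.

Lemma sum_pairE (A B : finType) (F : A * B -> R) :
  \sum_c F c = \sum_a \sum_b F (a, b).
Proof. by rewrite pair_big; apply: eq_bigr => -[]. Qed.

Lemma marg2_mulr_typ n (C : finType) (z : cube n * C -> R) i c :
  (forall p, 0 <= z p) ->
  marg2 z c * typ z i c = \sum_(x : cube n) (if x i then z (x, c) else 0).
Proof.
move=> z_ge0; rewrite /typ ffunE; case: eqP => [m0|/eqP m_neq0].
  have num_le : \sum_(x : cube n) (if x i then z (x, c) else 0) <= marg2 z c.
    by apply: ler_sum => x _; case: (x i).
  have num_ge0 : 0 <= \sum_(x : cube n) (if x i then z (x, c) else 0).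
    by apply: sumr_ge0 => x _; case: (x i).
  rewrite m0 mul0r; apply/esym/le_anti.
  by rewrite num_ge0 andbT (le_trans num_le) ?m0.
by rewrite mulrC divfK.
Qed.

Lemma cond2_neq0 (A B : finType) (eta : A * B -> R) a b :
  (forall c, 0 <= eta c) -> eta (a, b) != 0 -> cond2 eta a b != 0.
Proof.
move=> eta_ge0 eta_neq0.
have eta_gt0 : 0 < eta (a, b) by rewrite lt0r eta_neq0 eta_ge0.
have sum_gt0 : 0 < \sum_b' eta (a, b').
  by apply: lt_le_trans eta_gt0 _; rewrite (bigD1 b) //= lerDl sumr_ge0.
by rewrite /cond2 (gt_eqF sum_gt0) /= gt_eqF // divr_gt0.
Qed.

Lemma typ_flat n (A B : finType) (xi : cube n * A -> R) (eta : A * B -> R) i a b :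
  cond2 eta a b != 0 -> typ (flat xi eta) i (a, b) = typ xi i a.
Proof.
move=> cond_neq0; rewrite /typ !ffunE.
have -> : marg2 (flat xi eta) (a, b) = marg2 xi a * cond2 eta a b.
  by rewrite /marg2 /flat /= -mulr_suml.
have -> : \sum_(x : cube n) (if x i then flat xi eta (x, (a, b)) else 0)
          = (\sum_(x : cube n) (if x i then xi (x, a) else 0)) * cond2 eta a b.
  by rewrite /flat big_distrl /=; apply: eq_bigr => x _; case: (x i); rewrite ?mul0r.
rewrite mulf_eq0 (negbTE cond_neq0) orbF; case: eqP => // _.
by rewrite -mulf_div divff // mulr1.
Qed.

End Types.

Section Refinement.
Variables (R : realType) (n : nat) (A B : finType).
Variables (xi : cube n * A -> R) (xi' : cube n * (A * B) -> R).
Hypothesis href : is_refinement xi xi'.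

Lemma refinement_ge0 p : 0 <= xi' p.
Proof. by case: href => -[]. Qed.

Lemma refinement_base_ge0 p : 0 <= xi p.
Proof.
case: p => x a; case: href => _ <-.
by apply: sumr_ge0 => b _; apply: refinement_ge0.
Qed.

Lemma marg23_ge0 c : 0 <= marg23 xi' c.
Proof. by apply: sumr_ge0 => x _; apply: refinement_ge0. Qed.

Lemma sum_marg23 : \sum_c marg23 xi' c = 1.
Proof.
case: href => -[_ <-] _; rewrite /marg23 exchange_big pair_big.
by apply: eq_bigr => -[].
Qed.

Lemma sum_marg23_fst a : \sum_b marg23 xi' (a, b) = marg2 xi a.
Proof.
case: href => _ hsum; rewrite /marg23 /marg2 exchange_big.
by apply: eq_bigr => x _; rewrite hsum.
Qed.

Lemma sum_marg23_mulr_typ i a :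
  \sum_b marg23 xi' (a, b) * typ xi' i (a, b) = marg2 xi a * typ xi i a.
Proof.
rewrite (marg2_mulr_typ i a refinement_base_ge0).
under eq_bigr => b _ do rewrite (marg2_mulr_typ i (a, b) refinement_ge0).
rewrite exchange_big; case: href => _ hsum.
by apply: eq_bigr => x _; case: (x i); rewrite ?hsum ?big1.
Qed.

Lemma dl1_typ_flat i :
  dl1 (marg23 xi') (typ xi' i) (typ (flat xi (marg23 xi')) i)
  = \sum_c marg23 xi' c * `|typ xi' i c - typ xi i c.1|.
Proof.
apply: eq_bigr => -[a b] _ /=.
have [->|eta_neq0] := eqVneq (marg23 xi' (a, b)) 0; first by rewrite !mul0r.
by rewrite typ_flat // cond2_neq0 //; apply: marg23_ge0.
Qed.

(* After expanding the square, [sum_marg23_mulr_typ] turns the cross term into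
   [-2 xi|_2(a) t_i(a)^2], which combines with the constant term
   [xi|_2(a) t_i(a)^2]. *)
Lemma sum_marg23_typ_dev_sqr i :
  \sum_c marg23 xi' c * (typ xi' i c - typ xi i c.1) ^+ 2
  = \sum_c marg2 xi' c * typ xi' i c ^+ 2 - \sum_a marg2 xi a * typ xi i a ^+ 2.
Proof.
rewrite !sum_pairE -sumrB; apply: eq_bigr => a _ /=.
have -> : \sum_b marg23 xi' (a, b) * (typ xi' i (a, b) - typ xi i a) ^+ 2
  = \sum_b marg23 xi' (a, b) * typ xi' i (a, b) ^+ 2
    - typ xi i a *+ 2 * (\sum_b marg23 xi' (a, b) * typ xi' i (a, b))
    + typ xi i a ^+ 2 * \sum_b marg23 xi' (a, b).
  rewrite !mulr_sumr -sumrB -big_split /=.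
  by apply: eq_bigr => b _; ring.
by rewrite sum_marg23_mulr_typ sum_marg23_fst /marg23; ring.
Qed.

Lemma Ind_refinement_sub :
  Ind xi' - Ind xi
  = n%:R^-1 * \sum_i \sum_c marg23 xi' c * (typ xi' i c - typ xi i c.1) ^+ 2.
Proof.
rewrite /Ind -mulrBr -sumrB; congr (_ * _).
by apply: eq_bigr => i _; rewrite sum_marg23_typ_dev_sqr.
Qed.

End Refinement.

Section EarthMover.
Variable R : realType.

Lemma dEM_le_cost (T : eqType) (d : T -> T -> R) m1 m2 s :
  (forall x y, 0 <= d x y) -> is_coupling m1 m2 s ->
  dEM d m1 m2 <= \sum_(p <- s) p.1 * d p.2.1 p.2.2.
Proof.
move=> d_ge0 s_coupling; apply: ge_inf; last by exists s.
exists 0 => _ [q [[q_ge0 _ _] ->]].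
by rewrite big_seq; apply: sumr_ge0 => p /q_ge0 p1_ge0; rewrite mulr_ge0.
Qed.

Lemma typedist_index_coupling n (C : finType) (z1 z2 : cube n * C -> R) :
  is_coupling (typedist z1) (typedist z2)
    [seq (n%:R^-1, (typ z1 i, typ z2 i)) | i <- enum 'I_n].
Proof.
split=> [_ /mapP[i _ ->]|t|t]; rewrite ?invr_ge0 ?ler0n //;
  by rewrite big_map big_enum_cond /= sumr_const /typedist mulr_natl cardsE.
Qed.

Lemma dEM_typedist_le n (C : finType) (d : {ffun C -> R} -> {ffun C -> R} -> R)
    (z1 z2 : cube n * C -> R) :
  (forall x y, 0 <= d x y) ->
  dEM d (typedist z1) (typedist z2) <= n%:R^-1 * \sum_i d (typ z1 i) (typ z2 i).
Proof.
move=> d_ge0; apply: le_trans (dEM_le_cost d_ge0 (typedist_index_coupling _ _)) _.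
by rewrite big_map big_enum /= mulr_sumr.
Qed.

End EarthMover.

(* From [2 s |u| <= u^2 + s^2], averaged against [w]. *)
Lemma weighted_abs_le (R : realType) (I : finType) (w u : I -> R) (s : R) :
  (forall k, 0 <= w k) -> \sum_k w k <= 1 -> 0 < s ->
  \sum_k w k * u k ^+ 2 <= s ^+ 2 -> \sum_k w k * `|u k| <= s.
Proof.
move=> w_ge0 w_le1 s_gt0 second_le.
have amgm : \sum_k w k * (s *+ 2 * `|u k|) <= \sum_k (w k * u k ^+ 2 + s ^+ 2 * w k).
  apply: ler_sum => k _; rewrite [s ^+ 2 * _]mulrC -mulrDr.
  apply: ler_wpM2l => //; rewrite -real_normK ?num_real //.
  by have := sqr_ge0 (`|u k| - s); rewrite sqrrB mulr2n; lra.
move: amgm; rewrite big_split -!mulr_sumr /=.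
under eq_bigr do rewrite mulrCA; rewrite -mulr_sumr => amgm.
have sw_le : s ^+ 2 * \sum_k w k <= s ^+ 2 by rewrite ler_piMr ?sqr_ge0.
have : s *+ 2 * \sum_k w k * `|u k| <= s *+ 2 * s by rewrite mulr2n; nra.
by rewrite ler_pM2l ?mulrn_wgt0.
Qed.

Theorem lemma5p4 (R : realType) (n : nat) (A B : finType) (delta : R) (l : nat)
    (mu : cube n -> R) (xi : cube n * A -> R) (xi' : cube n * (A * B) -> R) :
  0 < delta < 1 ->
  is_dist mu ->
  is_detailing mu xi ->
  robust xi delta l ->
  (#|B| <= l)%N ->
  is_refinement xi xi' ->
  dEM (dl1 (marg23 xi')) (typedist xi') (typedist (flat xi (marg23 xi')))
    <= Num.sqrt delta.
Proof.
move=> /andP[delta_gt0 _] _ _ hrob hB href.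
pose w (k : 'I_n * (A * B)) := n%:R^-1 * marg23 xi' k.2.
pose u (k : 'I_n * (A * B)) := typ xi' k.1 k.2 - typ xi k.1 k.2.1.
have dl1_ge0 x y : 0 <= dl1 (marg23 xi') x y.
  by apply: sumr_ge0 => c _; rewrite mulr_ge0 ?(marg23_ge0 href).
apply: le_trans (dEM_typedist_le _ _ dl1_ge0) _.
have -> : n%:R^-1 * \sum_i dl1 (marg23 xi') (typ xi' i) (typ (flat xi (marg23 xi')) i)
          = \sum_k w k * `|u k|.
  rewrite sum_pairE mulr_sumr; apply: eq_bigr => i _.
  by rewrite dl1_typ_flat // mulr_sumr; apply: eq_bigr => c _; rewrite mulrA.
have second_moment : \sum_k w k * u k ^+ 2 = Ind xi' - Ind xi.
  rewrite Ind_refinement_sub // sum_pairE mulr_sumr; apply: eq_bigr => i _.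
  by rewrite mulr_sumr; apply: eq_bigr => c _; rewrite -mulrA.
apply: weighted_abs_le.
- by move=> k; rewrite mulr_ge0 ?invr_ge0 ?ler0n ?(marg23_ge0 href).
- rewrite /w sum_pairE; under eq_bigr do rewrite -mulr_sumr (sum_marg23 href) mulr1.
  rewrite sumr_const card_ord; have [->|n_gt0] := posnP n; first by rewrite mulr0n.
  by rewrite -[_ *+ n]mulr_natr mulVf // pnatr_eq0 -lt0n.
- by rewrite sqrtr_gt0.
- rewrite second_moment (sqr_sqrtr (ltW delta_gt0)).
  by have := hrob B hB xi' href; lra.
Qed.
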